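(* Let $N\in\mathbb{N}$, $m\in\mathrm{Ran}[m_N]\setminus\{-1,1\}$, $\mu\in\mathbb{R}$ and $\eta>0$. There is a cutoff $N(m,\eta)\in\mathbb{N}$ such that for $N\ge N(m,\eta)$, \[ \left(\tfrac12-\eta\right)\frac{\ln(N+1)}{N}\le\frac{\mathcal{H}(\mu_{\mathrm{MC}}^{m;N}\,\|\,\mu_{\mathrm{C}}^{\mu;N})}{N}-F(m,\mu)\le\frac{\ln(N+1)}{N}, \] where $F(m,\mu)=\ln2+\ln\cosh\mu+\mu m+\frac{1+m}2\ln\frac{1+m}2+\frac{1-m}2\ln\frac{1-m}2$. Moreover, every pair $(m,\mu)\in(\mathrm{Ran}[m_N]\setminus\{-1,1\})\times\mathbb{R}$ with $m=-\tanh\mu$ satisfies $F(m,\mu)=0$, and there are no other solutions of $F(m,\mu)=0$ among such pairs.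
   Context: $\Lambda$ is a finite lattice with $N=|\Lambda|$ sites, $\mathcal{S}=\{-1,1\}^\Lambda$, magnetization $M[\phi]=\sum_{x\in\Lambda}\phi(x)$, and $m_N[\phi]=M[\phi]/N$; $\mathrm{Ran}[m_N]$ is its range. For $m\in\mathrm{Ran}[m_N]$, $\mathcal{S}_m=\{\phi: m_N[\phi]=m\}$ and $\mu_{\mathrm{MC}}^{m;N}$ is the uniform probability measure on $\mathcal{S}_m$. For $\mu\in\mathbb{R}$, $\mu_{\mathrm{C}}^{\mu;N}$ is the probability measure on $\mathcal{S}$ with weights proportional to $e^{-\mu M[\phi]}$. The relative entropy is $\mathcal{H}(\lambda_1\|\lambda_2)=\int d\lambda_1\ln\frac{d\lambda_1}{d\lambda_2}$ if $\lambda_1\ll\lambda_2$ and $+\infty$ otherwise. *)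

From HB Require Import structures.
From mathcomp Require Import all_boot all_order all_algebra.
From mathcomp Require Import reals ereal sequences exp.
Unset Printing Implicit Defensive.
Import Order.TTheory GRing.Theory Num.Theory.
Local Open Scope ring_scope.

Definition cosh {R : realType} (x : R) : R := (expR x + expR (- x)) / 2.
Definition sinh {R : realType} (x : R) : R := (expR x - expR (- x)) / 2.
Definition tanh {R : realType} (x : R) : R := sinh x / cosh x.

(* Spin values: a configuration phi : Lambda -> {-1,1} is encoded as
   phi : {ffun L -> bool}, with true |-> 1 and false |-> -1. *)
Definition spin {R : realType} (b : bool) : R := if b then 1 else -1.

Definition config (L : finType) := {ffun L -> bool}.

Definition magn {R : realType} (L : finType) (phi : config L) : R :=
  \sum_(x : L) spin (phi x).

Definition mN {R : realType} (L : finType) (phi : config L) : R :=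
  magn L phi / #|L|%:R.

Definition inRan {R : realType} (L : finType) (m : R) : Prop :=
  exists phi : config L, mN L phi = m.

Definition muMC {R : realType} (L : finType) (m : R) (phi : config L) : R :=
  if mN L phi == m then (#|[set psi : config L | mN L psi == m]|%:R)^-1 else 0.

Definition muC {R : realType} (L : finType) (mu : R) (phi : config L) : R :=
  expR (- mu * magn L phi) / \sum_(psi : config L) expR (- mu * magn L psi).

(* relative entropy of probability (mass functions) on a finite type:
   int dl1 ln(dl1/dl2) if l1 << l2, +oo otherwise (convention 0 ln 0 = 0) *)
Definition relent {R : realType} (T : finType) (p q : T -> R) : \bar R :=
  if [forall x, (q x == 0) ==> (p x == 0)]
  then (\sum_(x : T | p x != 0) p x * ln (p x / q x))%:E
  else +oo%E.

Definition Fmmu {R : realType} (m mu : R) : R :=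
  ln 2 + ln (cosh mu) + mu * m
  + (1 + m) / 2 * ln ((1 + m) / 2) + (1 - m) / 2 * ln ((1 - m) / 2).

From HB Require Import structures.
From mathcomp Require Import all_boot all_order all_algebra.
From mathcomp Require Import reals ereal sequences exp.
From mathcomp Require Import classical_sets topology normedtype derive realfun.
From mathcomp Require Import ring lra.
Import Order.TTheory GRing.Theory Num.Theory.
Import numFieldNormedType.Exports.
Local Open Scope ring_scope.

(* The microcanonical measure is uniform on the level set S_m, which consists
   of the configurations with k = N (1 + m) / 2 up spins, and the canonical
   measure is constant on S_m.  Hence the relative entropy is
   N ln (2 cosh mu) + mu m N - ln C(N, k), and H / N - F(m, mu) = g / N with
   g = N ln N - k ln k - (N - k) ln (N - k) - ln C(N, k).  Stirling's formula
   with the explicit remainder bound |ln n! - (n + 1/2) ln n + n - 1| <= 1/2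
   gives g = (1/2) ln N + O_m(1), whence both bounds for large N.  Finally
   F(m, mu) is the Kullback-Leibler divergence between the Bernoulli laws of
   parameters (1 + m) / 2 and e^-mu / (2 cosh mu), so it vanishes exactly when
   these agree, i.e. when m = - tanh mu. *)

Section Hyperbolic.
Context {R : realType}.
Implicit Types mu : R.

Lemma two_coshE mu : 2 * cosh mu = expR mu + expR (- mu).
Proof. by rewrite /cosh mulrC divfK ?pnatr_eq0. Qed.

Lemma two_cosh_gt0 mu : 0 < 2 * cosh mu.
Proof. by rewrite two_coshE addr_gt0 ?expR_gt0. Qed.

Lemma cosh_gt0 mu : 0 < cosh mu.
Proof. by rewrite /cosh divr_gt0 ?addr_gt0 ?expR_gt0. Qed.

End Hyperbolic.

Section LnBounds.
Context {R : realType}.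
Implicit Types a b x : R.

Lemma ger0_is_derive_ndecr (f df : R -> R) a b : a <= b ->
  (forall z, a <= z <= b -> is_derive z 1 f (df z)) ->
  (forall z, a < z < b -> 0 <= df z) -> f a <= f b.
Proof.
move=> ab f_df df_ge0.
have itv_cc z : z \in `]a, b[ -> a <= z <= b.
  by rewrite in_itv /= => /andP[az zb]; rewrite !ltW.
apply: (@ger0_derive1_ndecr R f a b) => // [z /itv_cc/f_df df_z|z azb|].
- exact: ex_derive.
- by have := f_df z (itv_cc z azb) => df_z; rewrite derive1E derive_val; apply: df_ge0.
apply: continuous_in_subspaceT => z; rewrite inE /= in_itv /= => /f_df df_z.
by apply: differentiable_continuous; apply/derivable1_diffP; exact: ex_derive.
Qed.

Lemma ln1Dx_ge_quadratic x : 0 <= x -> x - x ^+ 2 / 2 <= ln (1 + x).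
Proof.
move=> x0.
pose f (y : R) := ln y - y + (y - 1) ^+ 2 / 2.
suff : f 1 <= f (1 + x).
  by rewrite /f ln1 subrr expr0n /= mul0r (addrC 1 x) addrK; lra.
apply: (@ger0_is_derive_ndecr f (fun z => (z - 1) ^+ 2 / z)); first lra.
  move=> z /andP[z1 _]; have z0 : 0 < z by lra.
  have := is_derive1_ln z0 => ?; apply: trigger_derive; rewrite /GRing.scale /=.
  by field; rewrite gt_eqF.
by move=> z /andP[z1 _]; rewrite divr_ge0 ?sqr_ge0 //; lra.
Qed.

Lemma ln1Dx_le_cubic x : 0 <= x -> ln (1 + x) <= x - x ^+ 2 / 2 + x ^+ 3 / 3.
Proof.
move=> x0.
pose f (y : R) := (y - 1) - (y - 1) ^+ 2 / 2 + (y - 1) ^+ 3 / 3 - ln y.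
suff : f 1 <= f (1 + x).
  by rewrite /f ln1 subrr expr0n /= mul0r (addrC 1 x) addrK; lra.
apply: (@ger0_is_derive_ndecr f (fun z => (z - 1) ^+ 3 / z)); first lra.
  move=> z /andP[z1 _]; have z0 : 0 < z by lra.
  have := is_derive1_ln z0 => ?; apply: trigger_derive; rewrite /GRing.scale /=.
  by field; rewrite gt_eqF.
by move=> z /andP[z1 _]; rewrite divr_ge0 ?exprn_ge0 //; lra.
Qed.

Lemma ln_natS_le [n] : (0 < n)%N -> ln n.+1%:R <= ln n%:R + 1 :> R.
Proof.
move=> n0; have n0' : (0 : R) < n%:R by rewrite ltr0n.
have -> : n.+1%:R = n%:R * (1 + n%:R^-1) :> R.
  by rewrite mulrDr mulr1 mulfV ?gt_eqF // -addn1 natrD.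
rewrite lnM ?posrE ?addr_gt0 ?invr_gt0 // lerD2l.
apply: le_trans (le_ln1Dx _) _; first by rewrite (lt_le_trans (ltrN10 R)) ?invr_ge0.
by rewrite invf_le1 // ler1n.
Qed.

Lemma exists_ln_ge (c : R) : exists N0 : nat, forall n, (N0 <= n)%N -> c <= ln n%:R.
Proof.
exists (Num.truncn (expR c)).+1 => n n_ge.
have c_lt : expR c < n%:R by rewrite (lt_le_trans (truncnS_gt _)) ?ler_nat.
by rewrite -ler_expR lnK ?ltW // posrE (lt_trans (expR_gt0 c)).
Qed.

End LnBounds.

Section Stirling.
Context {R : realType}.

Definition stirling_rem (n : nat) : R :=
  ln n`!%:R - (n%:R + 2^-1) * ln n%:R + n%:R.

Lemma stirling_rem1 : stirling_rem 1 = 1.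
Proof. by rewrite /stirling_rem ln1 mulr0 subr0 add0r. Qed.

Lemma stirling_remS n : (0 < n)%N ->
  stirling_rem n - stirling_rem n.+1 = (n%:R + 2^-1) * ln (1 + n%:R^-1) - 1.
Proof.
move=> n0; have n0' : (0 : R) < n%:R by rewrite ltr0n.
have -> : 1 + n%:R^-1 = n.+1%:R / n%:R :> R.
  by rewrite -addn1 natrD; field; rewrite gt_eqF.
rewrite ln_div ?posrE ?ltr0n // /stirling_rem factS natrM.
rewrite lnM ?posrE ?ltr0n ?fact_gt0 // -addn1 natrD; ring.
Qed.

(* Taylor bounds on ln (1 + x) squeeze the left-hand side between -x^2/4
   and x^2/12 + x^3/6. *)
Lemma stirling_increment_bound (x : R) : 0 < x <= 1 ->
  `|(x^-1 + 2^-1) * ln (1 + x) - 1| <= x ^+ 2 / (2 * (1 + x)).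
Proof.
move=> /andP[x0 x1]; have x_neq0 : x != 0 by rewrite gt_eqF.
have cube_le : x ^+ 3 <= x ^+ 2 by rewrite exprS ler_piMl ?sqr_ge0.
have c0 : 0 <= x^-1 + 2^-1 by rewrite addr_ge0 ?invr_ge0 //; lra.
have lb := ler_wpM2l c0 (ln1Dx_ge_quadratic x (ltW x0)).
have ub := ler_wpM2l c0 (ln1Dx_le_cubic x (ltW x0)).
rewrite (_ : _ * (x - _) = 1 - x ^+ 2 / 4) in lb; last by field.
rewrite (_ : _ * (x - _ + _) = 1 + x ^+ 2 / 12 + x ^+ 3 / 6) in ub; last by field.
have quarter_le : x ^+ 2 / 4 <= x ^+ 2 / (2 * (1 + x)).
  by rewrite ler_wpM2l ?sqr_ge0 // lef_pV2 ?posrE; lra.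
rewrite ler_norml; apply/andP; split; lra.
Qed.

Lemma stirling_remS_bound n : (0 < n)%N ->
  `|stirling_rem n - stirling_rem n.+1| <= 2^-1 / n%:R - 2^-1 / n.+1%:R.
Proof.
move=> n0; have n1 : (1 : R) <= n%:R by rewrite ler1n.
have -> : 2^-1 / n%:R - 2^-1 / n.+1%:R = n%:R^-1 ^+ 2 / (2 * (1 + n%:R^-1)) :> R.
  by rewrite -addn1 natrD; field; rewrite !gt_eqF //; lra.
rewrite stirling_remS // -[X in (X + 2^-1) * _]invrK.
by apply: stirling_increment_bound; rewrite invr_gt0 invf_le1; lra.
Qed.

Lemma stirling_rem_bound n : (0 < n)%N ->
  `|stirling_rem n - 1| <= 2^-1 - 2^-1 / n%:R.
Proof.
elim: n => [//|[_ _|n IH _]]; first by rewrite stirling_rem1 subrr normr0 divr1 subrr.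
have -> : stirling_rem n.+2 - 1
          = (stirling_rem n.+1 - 1) - (stirling_rem n.+1 - stirling_rem n.+2) by ring.
apply: (le_trans (ler_normB _ _)).
rewrite -[2^-1 - _](subrKA (2^-1 / n.+1%:R)).
exact: lerD (IH isT) (stirling_remS_bound n.+1 isT).
Qed.

End Stirling.

Section BinomialGap.
Context {R : realType}.

Definition binom_gap (N k : nat) : R :=
  N%:R * ln N%:R - k%:R * ln k%:R - (N - k)%:R * ln (N - k)%:R - ln 'C(N, k)%:R.

Lemma ln_fact n :
  ln n`!%:R = stirling_rem n + (n%:R + 2^-1) * ln n%:R - n%:R :> R.
Proof. by rewrite /stirling_rem; move: (ln _) (ln _) => ? ?; ring. Qed.

Lemma binom_gap_stirling N k : (k <= N)%N ->
  binom_gap N k = stirling_rem k + stirling_rem (N - k) - stirling_rem N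
                  + 2^-1 * (ln k%:R + ln (N - k)%:R - ln N%:R).
Proof.
move=> kN; have fact_pos n : (0 : R) < n`!%:R by rewrite ltr0n fact_gt0.
have ln_binom : ln 'C(N, k)%:R = ln N`!%:R - ln k`!%:R - ln (N - k)`!%:R :> R.
  rewrite -(bin_fact kN) !natrM !lnM ?posrE ?mulr_gt0 ?ltr0n ?bin_gt0 ?fact_gt0 //; ring.
rewrite /binom_gap ln_binom !ln_fact natrB //.
(* Abstracting the logarithms first keeps [ring] from comparing them by
   conversion, which would unfold [ln] and the factorials. *)
move: (stirling_rem _) (stirling_rem _) (stirling_rem _) => sk sNk sN.
move: (ln _) (ln _) (ln _) => lk lNk lN; ring.
Qed.

Lemma binom_gap_bound [N k : nat] : (0 < k < N)%N ->
  `|binom_gap N k - 1 - 2^-1 * (ln k%:R + ln (N - k)%:R - ln N%:R)| <= 3 / 2.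
Proof.
have n_ge0 n : (0 : R) <= 2^-1 / n%:R by rewrite divr_ge0 ?ler0n.
move=> /andP[k0 kN]; rewrite binom_gap_stirling; last exact: ltnW.
have Nk0 : (0 < N - k)%N by rewrite subn_gt0.
have sk := @stirling_rem_bound R k k0.
have sNk := @stirling_rem_bound R (N - k)%N Nk0.
have sN := @stirling_rem_bound R N (ltn_trans k0 kN).
have hk := n_ge0 k; have hNk := n_ge0 (N - k)%N; have hN := n_ge0 N.
move: sk sNk sN; rewrite !ler_norml.
move: (stirling_rem k) (stirling_rem (N - k)%N) (stirling_rem N).
move: (2^-1 / k%:R) (2^-1 / (N - k)%:R) (2^-1 / N%:R) hk hNk hN.
move: (2^-1 * _) => l a b c *; lra.
Qed.

Lemma binom_gap_asymp [N k : nat] [eta : R] : (0 < k < N)%N -> 0 <= eta ->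
  5 <= ln N%:R :> R ->
  1 - 2^-1 * (ln (k%:R / N%:R) + ln ((N - k)%:R / N%:R)) <= eta * ln N%:R ->
  (2^-1 - eta) * ln N.+1%:R <= binom_gap N k <= ln N.+1%:R.
Proof.
move=> kN eta0 lnN5; have /andP[k0 kltN] := kN; have N0 := ltn_trans k0 kltN.
have [k0' N0'] : (0 : R) < k%:R /\ (0 : R) < N%:R by rewrite !ltr0n.
have Nk0 : (0 : R) < (N - k)%:R by rewrite ltr0n subn_gt0.
rewrite !ln_div ?posrE // => K_le.
have lnk : ln k%:R <= ln N%:R :> R by rewrite ler_ln ?posrE // ler_nat ltnW.
have lnNk : ln (N - k)%:R <= ln N%:R :> R by rewrite ler_ln ?posrE // ler_nat leq_subr.
have lnNS : ln N%:R <= ln N.+1%:R :> R by rewrite ler_ln ?posrE ?ltr0n // ler_nat.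
have lnNS_le := @ln_natS_le R N N0.
have eta_lnNS := ler_wpM2l eta0 lnNS.
have := binom_gap_bound kN; rewrite ler_norml mulrBl.
move: (binom_gap N k) (eta * _) (eta * _) K_le eta_lnNS lnNS_le lnNS lnNk lnk lnN5.
by move: (ln k%:R) (ln (N - k)%:R) (ln N%:R) (ln N.+1%:R) => *; lra.
Qed.

End BinomialGap.

Section SpinConfigurations.
Context {R : realType} {L : finType}.
Implicit Types (phi psi : config L) (m mu : R).

Definition nup phi : nat := #|[set x | phi x]|.

Lemma nup_le phi : (nup phi <= #|L|)%N.
Proof. exact: max_card. Qed.

Lemma magn_nup phi : magn L phi = 2 * (nup phi)%:R - #|L|%:R :> R.
Proof.
have spinE b : spin b = 2 * (b : nat)%:R - 1 :> R by case: b; rewrite /spin /=; ring.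
rewrite /magn (eq_bigr _ (fun x _ => spinE (phi x))) sumrB -mulr_sumr sumr_const.
congr (2 * _ - _); rewrite /nup -sum1_card natr_sum [RHS]big_mkcond /=.
by apply: eq_bigr => x _; rewrite inE; case: (phi x).
Qed.

Lemma mN_nup phi : (0 < #|L|)%N -> mN L phi = 2 * (nup phi)%:R / #|L|%:R - 1 :> R.
Proof. by move=> L0; rewrite /mN magn_nup mulrBl mulfV // pnatr_eq0 -lt0n. Qed.

Lemma nup_strict_bounds [m phi] : (0 < #|L|)%N -> mN L phi = m ->
  m != -1 -> m != 1 -> (0 < nup phi < #|L|)%N.
Proof.
move=> L0 <- m_neqN1 m_neq1; have m_k := mN_nup phi L0.
rewrite lt0n ltn_neqAle nup_le andbT; apply/andP; split.
  by apply: contraNneq m_neqN1 => k0; rewrite m_k k0 mulr0 mul0r sub0r.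
by apply: contraNneq m_neq1 => kN; rewrite m_k kN mulfK ?pnatr_eq0 -?lt0n // addrK.
Qed.

Lemma mN_bound phi : -1 <= mN (R := R) L phi <= 1.
Proof.
have [L0|L0] := posnP #|L|; first by rewrite /mN L0 invr0 mulr0; lra.
have N0 : (0 : R) < #|L|%:R by rewrite ltr0n.
have k_ge0 : 0 <= (nup phi)%:R / #|L|%:R :> R by rewrite divr_ge0 ?ler0n.
have k_le1 : (nup phi)%:R / #|L|%:R <= 1 :> R by rewrite ler_pdivrMr // mul1r ler_nat nup_le.
rewrite mN_nup // -mulrA; lra.
Qed.

Lemma card_nup k : #|[set phi : config L | nup phi == k]| = 'C(#|L|, k).
Proof.
pose indicator (A : {set L}) : config L := [ffun x => x \in A].
have indicator_inj : injective indicator.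
  by move=> A B /ffunP eqAB; apply/setP => x; have := eqAB x; rewrite !ffunE.
suff -> : [set phi | nup phi == k] = indicator @: [set A : {set L} | #|A| == k].
  by rewrite (card_imset _ indicator_inj) card_draws.
apply/setP => phi; rewrite !inE; apply/idP/imsetP => [nup_phi|[A]].
  by exists [set x | phi x]; [rewrite inE | apply/ffunP => x; rewrite ffunE inE].
rewrite inE => /eqP <- ->; rewrite /nup (_ : [set x | _] = A) //.
by apply/setP => x; rewrite inE ffunE.
Qed.

Lemma partition_functionE mu :
  \sum_(psi : config L) expR (- mu * magn L psi) = (2 * cosh mu) ^+ #|L|.
Proof.
have expR_magn psi : expR (- mu * magn L psi) = \prod_x expR (- mu * spin (psi x)).
  by rewrite /magn mulr_sumr expR_sum.
rewrite (eq_bigr _ (fun psi _ => expR_magn psi)).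
rewrite -(bigA_distr_bigA (fun (x : L) (b : bool) => expR (- mu * spin b))) /=.
rewrite -prodr_const; apply: eq_bigr => x _.
by rewrite big_bool /spin /= mulr1 mulrN1 opprK /cosh mulrC divfK ?pnatr_eq0 // addrC.
Qed.

Lemma eq_mN phi psi : (0 < #|L|)%N ->
  (mN (R := R) L phi == mN L psi) = (nup phi == nup psi).
Proof.
move=> L0; rewrite !mN_nup // (inj_eq (addIr _)) (inj_eq (mulIf _)) ?invr_eq0 ?pnatr_eq0 -?lt0n //.
by rewrite (inj_eq (mulrI _)) ?eqr_nat // unitfE pnatr_eq0.
Qed.

Lemma muC_gt0 mu phi : 0 < muC L mu phi.
Proof.
have Z_gt0 : 0 < (2 * cosh mu) ^+ #|L| by rewrite exprn_gt0 ?two_cosh_gt0.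
by rewrite /muC partition_functionE divr_gt0 // expR_gt0.
Qed.

Lemma relentE [m] mu [phi0] : (0 < #|L|)%N -> mN L phi0 = m ->
  relent (config L) (muMC L m) (muC L mu)
  = (#|L|%:R * ln (2 * cosh mu) + mu * m * #|L|%:R - ln 'C(#|L|, nup phi0)%:R)%:E.
Proof.
move=> L0 m_phi0; set C := 'C(#|L|, nup phi0).
have card_level : #|[set phi : config L | mN L phi == m]| = C.
  by rewrite /C -card_nup; apply: eq_card => phi; rewrite !inE -m_phi0 eq_mN.
have C_gt0 : (0 : R) < C%:R by rewrite ltr0n bin_gt0 nup_le.
have magnE phi : mN L phi = m -> magn L phi = m * #|L|%:R.
  by move=> <-; rewrite /mN divfK // pnatr_eq0 -lt0n.
rewrite /relent ifT; last by apply/forallP => phi; rewrite gt_eqF ?muC_gt0.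
congr EFin; rewrite (eq_bigl (fun phi => phi \in [set phi | mN L phi == m])); last first.
  move=> phi; rewrite inE /muMC card_level.
  by case: (_ == m); rewrite ?eqxx // invr_eq0 gt_eqF.
rewrite (eq_bigr (fun _ => C%:R^-1 * ln (C%:R^-1 / muC L mu phi0))); last first.
  by move=> phi; rewrite inE => /eqP phi_m; rewrite /muMC /muC card_level phi_m eqxx !magnE.
rewrite sumr_const card_level -mulrnAl -[C%:R^-1 *+ C]mulr_natr mulVf ?gt_eqF // mul1r.
rewrite ln_div ?posrE ?invr_gt0 ?muC_gt0 // lnV ?posrE //.
have Z_gt0 : 0 < (2 * cosh mu) ^+ #|L| by rewrite exprn_gt0 ?two_cosh_gt0.
rewrite /muC partition_functionE magnE // ln_div ?posrE ?expR_gt0 // expRK lnXn.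
  by move: (ln C%:R) (ln (2 * cosh mu)) => lnC lnZ; ring.
exact: two_cosh_gt0.
Qed.

End SpinConfigurations.

Section BernoulliDivergence.
Context {R : realType}.
Implicit Types (x y z p a m mu : R).

Lemma ln_le_subr1 [z] : 0 < z -> ln z <= z - 1 ?= iff (z == 1).
Proof.
move=> z0; have [->|z_neq1] := eqVneq z 1; first by rewrite ln1 subrr; exact: leif_refl.
apply/leifP; rewrite -ltr_expR lnK ?posrE //.
by rewrite -[X in X < _](subrK 1) addrC expR_gt1Dx // subr_eq0.
Qed.

Lemma sub_le_mul_ln [x y] : 0 < x -> 0 < y -> x - y <= x * ln (x / y) ?= iff (x == y).
Proof.
move=> x0 y0; have [->|x_neq_y] := eqVneq x y.
  by rewrite divff ?gt_eqF // ln1 mulr0 subrr; exact: leif_refl.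
have yx_neq1 : y / x != 1.
  by apply: contra x_neq_y => /eqP yx1; rewrite -[y](divfK (lt0r_neq0 x0)) yx1 mul1r.
have /leifP := ln_le_subr1 (divr_gt0 y0 x0); rewrite (negPf yx_neq1) => ln_lt.
apply/leifP.
rewrite -[x / y]invf_div lnV ?posrE ?divr_gt0 // mulrN ltrNr opprB.
by rewrite -[X in _ < X](divfK (lt0r_neq0 x0)) mulrC ltr_pM2r // mulrBl divff ?lt0r_neq0.
Qed.

Definition bernoulli_kl p a : R :=
  p * ln (p / a) + (1 - p) * ln ((1 - p) / (1 - a)).

Lemma bernoulli_kl_ge0 [p a] : 0 < p < 1 -> 0 < a < 1 ->
  0 <= bernoulli_kl p a ?= iff (p == a).
Proof.
move=> /andP[p0 p1] /andP[a0 a1].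
have := leifD (sub_le_mul_ln p0 a0) (@sub_le_mul_ln (1 - p) (1 - a) _ _).
rewrite subr_gt0 p1 subr_gt0 a1 => /(_ isT isT).
rewrite (inj_eq (addrI 1)) (inj_eq oppr_inj) andbb.
by have -> : p - a + (1 - p - (1 - a)) = 0 by ring.
Qed.

Lemma Fmmu_bernoulli_kl m mu : -1 < m < 1 ->
  Fmmu m mu = bernoulli_kl ((1 + m) / 2) (expR (- mu) / (2 * cosh mu)).
Proof.
move=> /andP[m_gtN1 m_lt1].
have c0 := two_cosh_gt0 mu.
rewrite /bernoulli_kl.
have -> : 1 - (1 + m) / 2 = (1 - m) / 2 by field.
have -> : 1 - expR (- mu) / (2 * cosh mu) = expR mu / (2 * cosh mu).
  by rewrite two_coshE; field; rewrite -two_coshE gt_eqF.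
have ln_ratio s t : 0 < s -> ln (s / (expR t / (2 * cosh mu))) = ln s - t + ln (2 * cosh mu).
  move=> s0; rewrite ln_div ?posrE ?divr_gt0 ?expR_gt0 //.
  by rewrite ln_div ?posrE ?expR_gt0 // expRK; lra.
have ln_two_cosh : ln (2 * cosh mu) = ln 2 + ln (cosh mu) by rewrite lnM ?posrE ?cosh_gt0.
by rewrite /Fmmu !ln_ratio ?divr_gt0 //; lra.
Qed.

Lemma bernoulli_param_eq m mu :
  ((1 + m) / 2 == expR (- mu) / (2 * cosh mu)) = (m == - tanh mu).
Proof.
have e0 : expR mu + expR (- mu) != 0 by rewrite gt_eqF ?addr_gt0 ?expR_gt0.
have -> : - tanh mu = 2 * (expR (- mu) / (2 * cosh mu)) - 1.
  by rewrite /tanh /sinh two_coshE /cosh; field.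
move: (expR (- mu) / _) => a.
by apply/eqP/eqP => [<-|->]; field.
Qed.

Lemma Fmmu_eq0 m mu : -1 < m < 1 -> Fmmu m mu = 0 <-> m = - tanh mu.
Proof.
move=> m_bound; have /andP[m_gtN1 m_lt1] := m_bound.
have c0 := two_cosh_gt0 mu.
have p01 : 0 < (1 + m) / 2 < 1 by apply/andP; split; lra.
have a01 : 0 < expR (- mu) / (2 * cosh mu) < 1.
  by rewrite divr_gt0 ?expR_gt0 //= ltr_pdivrMr // mul1r two_coshE ltrDr expR_gt0.
have := (bernoulli_kl_ge0 p01 a01).2; rewrite eq_sym bernoulli_param_eq => kl_eq0.
rewrite Fmmu_bernoulli_kl //.
by split=> [kl0|m_eq]; apply/eqP; rewrite -?kl_eq0 ?kl0 // kl_eq0 m_eq.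
Qed.

End BernoulliDivergence.

Section EntropyGap.
Context {R : realType}.

Lemma up_down_fractions [N k : nat] [m : R] : (0 < N)%N -> (k <= N)%N ->
  m = 2 * k%:R / N%:R - 1 ->
  (1 + m) / 2 = k%:R / N%:R /\ (1 - m) / 2 = (N - k)%:R / N%:R.
Proof.
move=> N0 kN ->; have N_neq0 : N%:R != 0 :> R by rewrite pnatr_eq0 -lt0n.
by split; rewrite ?natrB //; field.
Qed.

Lemma Fmmu_binom_gap [N k : nat] [m : R] (mu : R) : (0 < k < N)%N ->
  m = 2 * k%:R / N%:R - 1 ->
  N%:R^-1 * (N%:R * ln (2 * cosh mu) + mu * m * N%:R - ln 'C(N, k)%:R) - Fmmu m mu
  = binom_gap N k / N%:R.
Proof.
move=> /andP[k0 kN] m_k; have N0 := ltn_trans k0 kN.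
have [k0' N0'] : (0 : R) < k%:R /\ (0 : R) < N%:R by split; rewrite ltr0n.
have Nk0 : (0 : R) < (N - k)%:R by rewrite ltr0n subn_gt0.
have ln_frac j : (0 : R) < j%:R -> ln (j%:R / N%:R) = ln j%:R - ln N%:R :> R.
  by move=> j0; rewrite ln_div ?posrE.
have ln_two_cosh : ln (2 * cosh mu) = ln 2 + ln (cosh mu) by rewrite lnM ?posrE ?cosh_gt0.
have [p_eq q_eq] := up_down_fractions N0 (ltnW kN) m_k.
have natrNk : (N - k)%:R = N%:R - k%:R :> R by rewrite natrB // ltnW.
rewrite /Fmmu p_eq q_eq !ln_frac // ln_two_cosh /binom_gap m_k natrNk.
have N_neq0 : N%:R != 0 :> R by rewrite gt_eqF.
move: (ln k%:R) (ln (N%:R - k%:R)) (ln N%:R) (ln 2) (ln (cosh mu)) (ln 'C(N, k)%:R).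
by move=> lk lNk lN l2 lc lC; field.
Qed.

End EntropyGap.

Theorem proposition3p6 (R : realType) :
  (forall m : R, m != -1 -> m != 1 ->
   forall eta : R, 0 < eta ->
   exists N0 : nat, forall L : finType, (N0 <= #|L|)%N -> inRan L m ->
   forall mu : R,
     (((2^-1 - eta) * (ln (#|L|.+1%:R : R) / #|L|%:R))%:E
        <= ((#|L|%:R : R)^-1)%:E * relent (config L) (muMC L m) (muC L mu) - (Fmmu m mu)%:E)%E
     /\
     (((#|L|%:R : R)^-1)%:E * relent (config L) (muMC L m) (muC L mu) - (Fmmu m mu)%:E
        <= (ln (#|L|.+1%:R : R) / #|L|%:R)%:E)%E)
  /\
  (forall (L : finType) (m mu : R), inRan L m -> m != -1 -> m != 1 ->
     (Fmmu m mu = 0 <-> m = - tanh mu)).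
Proof.
split=> [m m_neqN1 m_neq1 eta eta0 | L m mu [phi <-] m_neqN1 m_neq1]; last first.
  apply: Fmmu_eq0; have /andP[m_geN1 m_le1] := @mN_bound R L phi.
  by rewrite !lt_neqAle m_geN1 m_le1 eq_sym m_neqN1 m_neq1.
pose K := 1 - 2^-1 * (ln ((1 + m) / 2) + ln ((1 - m) / 2)).
have [N1 lnN1] := exists_ln_ge (5 : R); have [N2 lnN2] := exists_ln_ge (K / eta).
exists (maxn N1 N2) => L; rewrite geq_max => /andP[/lnN1 ln5 /lnN2 lnK] [phi m_phi] mu.
have L0 : (0 < #|L|)%N.
  by rewrite lt0n; apply: contraTneq ln5 => ->; rewrite ln0 // -ltNge ltr0n.
have kL := nup_strict_bounds L0 m_phi m_neqN1 m_neq1.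
have m_k : m = 2 * (nup phi)%:R / #|L|%:R - 1 by rewrite -m_phi mN_nup.
have [p_eq q_eq] := up_down_fractions L0 (nup_le phi) m_k.
have K_le : 1 - 2^-1 * (ln ((nup phi)%:R / #|L|%:R) + ln ((#|L| - nup phi)%:R / #|L|%:R))
            <= eta * ln #|L|%:R by rewrite -p_eq -q_eq [eta * _]mulrC -ler_pdivrMr.
have /andP[gap_lb gap_ub] := binom_gap_asymp kL (ltW eta0) ln5 K_le.
rewrite (relentE mu L0 m_phi) -EFinM -EFinB !lee_fin (Fmmu_binom_gap mu kL m_k) mulrA.
by split; rewrite ler_pM2r ?invr_gt0 ?ltr0n.
Qed.
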